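(* Let $\alpha,\beta\in(0,\pi/2)$ and consider the system on $S^2$ described in the context. There is no abnormal extremal pair $(x,\lambda)$ with $x(0)=N=(0,0,1)$ whose trajectory is bang-bang.
   Context: The system is $\dot x=Fx+u_1G_1x+u_2G_2x$ on the unit sphere $S^2\subset\mathbb R^3$, measurable controls $|u_i|\le1$, with $F=\cos\alpha\begin{pmatrix}0&-1&0\\1&0&0\\0&0&0\end{pmatrix}$, $G_1=\sin\alpha\sin\beta\begin{pmatrix}0&0&0\\0&0&-1\\0&1&0\end{pmatrix}$, $G_2=\sin\alpha\cos\beta\begin{pmatrix}0&0&-1\\0&0&0\\1&0&0\end{pmatrix}$. An extremal pair: trajectory $x$ with control $u$ on $[0,T]$, Lipschitz row vector $\lambda(t)\in\mathbb R^3$ with $\lambda(t)\cdot x(t)=0$, $\lambda(t)\ne0$, and constant $\lambda_0\le0$, such that a.e. $\dot\lambda=-\lambda(F+u_1G_1+u_2G_2)$, $u(t)$ maximizes $\lambda Fx+u_1\lambda G_1x+u_2\lambda G_2x+\lambda_0$ over $[-1,1]^2$, and the maximum is $0$. It is abnormal if $\lambda_0=0$. Bang-bang: $u$ is a finite concatenation of arcs on which it is a.e. constant in $\{-1,1\}^2$. *)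

From mathcomp Require Import all_boot all_algebra.
From mathcomp Require Import all_classical all_reals all_analysis.
Import GRing.Theory Num.Theory.
Set Implicit Arguments.
Unset Strict Implicit.
Unset Printing Implicit Defensive.
Local Open Scope ring_scope.
Local Open Scope classical_set_scope.

Section Sphere.
Variable R : realType.

Definition i0 : 'I_3 := inord 0.
Definition i1 : 'I_3 := inord 1.
Definition i2 : 'I_3 := inord 2.

Definition Fmx (a : R) : 'M[R]_3 :=
  cos a *: (delta_mx i1 i0 - delta_mx i0 i1).
Definition G1mx (a b : R) : 'M[R]_3 :=
  (sin a * sin b) *: (delta_mx i2 i1 - delta_mx i1 i2).
Definition G2mx (a b : R) : 'M[R]_3 :=
  (sin a * cos b) *: (delta_mx i2 i0 - delta_mx i0 i2).

Definition Amx (a b v1 v2 : R) : 'M[R]_3 :=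
  Fmx a + v1 *: G1mx a b + v2 *: G2mx a b.

Definition north : 'cV[R]_3 := delta_mx i2 0.

Definition ham (a b : R) (lam0 : R) (lam : 'rV[R]_3) (x : 'cV[R]_3)
    (v1 v2 : R) : R :=
  (lam *m (Amx a b v1 v2 *m x)) 0 0 + lam0.

(* Trajectories and costates are Lipschitz on [0,T]
   (hence absolutely continuous) and satisfy the ODEs almost everywhere. *)
Definition extremal_pair (a b T : R) (x : R -> 'cV[R]_3) (u1 u2 : R -> R)
    (lam : R -> 'rV[R]_3) (lam0 : R) : Prop :=
  [/\ 0 < T,
      [/\ measurable_fun `[0, T] u1, measurable_fun `[0, T] u2 &
          forall t, 0 <= t <= T -> `|u1 t| <= 1 /\ `|u2 t| <= 1],
      [/\ [lipschitz x t | t in `[0, T]],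
          (forall t, 0 <= t <= T -> \sum_(i < 3) (x t i 0) ^+ 2 = 1) &
          (\forall t \ae (@lebesgue_measure R), `]0, T[ t ->
             derivable x t 1 /\ 'D_1 x t = Amx a b (u1 t) (u2 t) *m x t)],
      [/\ [lipschitz lam t | t in `[0, T]],
          (forall t, 0 <= t <= T -> (lam t *m x t) 0 0 = 0),
          (forall t, 0 <= t <= T -> lam t != 0) &
          (\forall t \ae (@lebesgue_measure R), `]0, T[ t ->
             derivable lam t 1 /\
             'D_1 lam t = - (lam t *m Amx a b (u1 t) (u2 t)))] &
      lam0 <= 0 /\
      (\forall t \ae (@lebesgue_measure R), `]0, T[ t ->
         (forall v1 v2, `|v1| <= 1 -> `|v2| <= 1 ->
            ham a b lam0 (lam t) (x t) v1 v2
              <= ham a b lam0 (lam t) (x t) (u1 t) (u2 t)) /\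
         ham a b lam0 (lam t) (x t) (u1 t) (u2 t) = 0)].

Definition abnormal_extremal_pair (a b T : R) (x : R -> 'cV[R]_3)
    (u1 u2 : R -> R) (lam : R -> 'rV[R]_3) : Prop :=
  extremal_pair a b T x u1 u2 lam 0.

Definition bang_bang (T : R) (u1 u2 : R -> R) : Prop :=
  exists (k : nat) (tau : nat -> R),
    [/\ tau 0%N = 0, tau k = T,
        (forall i, (i < k)%N -> tau i < tau i.+1) &
        forall i, (i < k)%N -> exists c1 c2 : R,
          [/\ c1 = 1 \/ c1 = -1, c2 = 1 \/ c2 = -1 &
              (\forall t \ae (@lebesgue_measure R), `]tau i, tau i.+1[ t ->
                 u1 t = c1 /\ u2 t = c2)]].

End Sphere.

(** At the north pole [N] only the two control fields act: [Amx a b v1 v2 *m N]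
    is [(-v2 sin a cos b, -v1 sin a sin b, 0)], and the drift [F] vanishes.  A
    nonzero covector orthogonal to [N] therefore has a nonzero first or second
    entry, and choosing [v] in the box against the signs of these entries makes
    the abnormal Hamiltonian strictly positive at [t = 0].  Since [x] and [lam]
    are Lipschitz, the Hamiltonian at that fixed [v] stays positive on some
    interval [(0, c)], contradicting that its maximum over the box vanishes
    almost everywhere. *)

From mathcomp Require Import all_boot all_algebra.
From mathcomp Require Import all_classical all_reals all_analysis.
From mathcomp Require Import ring lra.
Import order.Order.TTheory GRing.Theory Num.Theory numFieldNormedType.Exports.
Local Open Scope ring_scope.
Local Open Scope classical_set_scope.

Lemma eq_inord n i j : (i <= n)%N -> (j <= n)%N ->
  (inord i == inord j :> 'I_n.+1) = (i == j).
Proof. by move=> ? ?; rewrite -val_eqE /= !inordK. Qed.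

Section Sphere.
Context {R : realType}.

Lemma sum_ord3 (F : 'I_3 -> R) : \sum_j F j = F i0 + F i1 + F i2.
Proof.
rewrite !big_ord_recr big_ord0 /= add0r.
by congr (F _ + F _ + F _); apply/val_inj; rewrite /= inordK.
Qed.

Lemma row3_eq0 {L : 'rV[R]_3} :
  L 0 i0 = 0 -> L 0 i1 = 0 -> L 0 i2 = 0 -> L = 0.
Proof.
move=> L0 L1 L2; apply/rowP => j; rewrite mxE -[j]inord_val.
by case: j => [[|[|[|k]]] //= _].
Qed.

Lemma mulmx_north (L : 'rV[R]_3) : (L *m north R) 0 0 = L 0 i2.
Proof. by rewrite -colE mxE. Qed.

Lemma mulmx_Amx_north a b v1 v2 (L : 'rV[R]_3) :
  (L *m (Amx a b v1 v2 *m north R)) 0 0 =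
  - (v2 * (sin a * cos b) * L 0 i0) - v1 * (sin a * sin b) * L 0 i1.
Proof.
rewrite -colE mxE sum_ord3 /Amx /Fmx /G1mx /G2mx !mxE.
by rewrite /i0 /i1 /i2 !eq_inord //=; lra.
Qed.

Lemma exists_control_Amx_north_gt0 {a b : R} {L : 'rV[R]_3} :
  0 < sin a * sin b -> 0 < sin a * cos b ->
  L != 0 -> (L *m north R) 0 0 = 0 ->
  exists v1 v2, [/\ `|v1| <= 1, `|v2| <= 1 &
                    0 < (L *m (Amx a b v1 v2 *m north R)) 0 0].
Proof.
move=> s1_gt0 s2_gt0 L_neq0; rewrite mulmx_north => L2.
exists (- Num.sg (L 0 i1)), (- Num.sg (L 0 i0)).
rewrite !normrN !normr_sg !lern1 !leq_b1 mulmx_Amx_north; split => //.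
have -> : - (- Num.sg (L 0 i0) * (sin a * cos b) * L 0 i0)
            - - Num.sg (L 0 i1) * (sin a * sin b) * L 0 i1
          = sin a * cos b * `|L 0 i0| + sin a * sin b * `|L 0 i1|.
  by rewrite !normrEsg; ring.
have [L0|L0] := eqVneq (L 0 i0) 0.
  have [L1|L1] := eqVneq (L 0 i1) 0.
    by rewrite (row3_eq0 L0 L1 L2) eqxx in L_neq0.
  by rewrite L0 normr0 mulr0 add0r pmulr_rgt0 // normr_gt0.
apply: ltr_pwDl; first by rewrite pmulr_rgt0 // normr_gt0.
by rewrite mulr_ge0 ?normr_ge0 ?ltW.
Qed.

Lemma lipschitz_cvg_right (V : normedModType R) (f : R -> V) (a b : R) :
  a < b -> [lipschitz f t | t in `[a, b]] -> f t @[t --> a^'+] --> f a.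
Proof.
move=> ab /pinfty_ex_gt0 [M M_gt0 fM]; apply/cvgrPdist_lt => e e_gt0.
near=> t.
have at_ : a < t by near: t; apply: nbhs_right_gt.
have tb : t < b by near: t; apply: nbhs_right_lt.
have tM : t - a < e / M.
  by rewrite ltrBlDl; near: t; apply: nbhs_right_lt; rewrite ltrDl divr_gt0.
have fat : `|f a - f t| <= M * `|a - t|.
  apply: (fM (a, t)); split; rewrite /= in_itv /=.
    by rewrite lexx ltW.
  by rewrite !ltW.
apply: (le_lt_trans fat).
by rewrite distrC gtr0_norm ?subr_gt0 // mulrC -ltr_pdivlMr.
Unshelve. all: by end_near. Qed.

Lemma cvg_entry {T : Type} (F : set_system T) {FF : Filter F} m n
    (f : T -> 'M[R]_(m, n)) (L : 'M[R]_(m, n)) (i : 'I_m) (j : 'I_n) :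
  f t @[t --> F] --> L -> f t i j @[t --> F] --> L i j.
Proof. by move=> fL; exact: (cvg_comp _ _ fL (@coord_continuous R m n i j L)). Qed.

Lemma cvg_bilinear {T : Type} (F : set_system T) {FF : Filter F} n
    (A : 'M[R]_n) (f : T -> 'rV[R]_n) (g : T -> 'cV[R]_n)
    (L : 'rV[R]_n) (X : 'cV[R]_n) :
  f t @[t --> F] --> L -> g t @[t --> F] --> X ->
  (f t *m (A *m g t)) 0 0 @[t --> F] --> (L *m (A *m X)) 0 0.
Proof.
move=> fL gX; rewrite mxE; under eq_cvg do rewrite mxE.
apply: cvg_big => [|k _]; first exact: add_continuous.
apply: cvgM; first exact: cvg_entry.
rewrite mxE; under eq_cvg do rewrite mxE.
apply: cvg_big => [|l _]; first exact: add_continuous.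
by apply: cvgM; [exact: cvg_cst | exact: cvg_entry].
Qed.

Lemma ae_itv_frequently_right {a b : R} (P : R -> Prop) : a < b ->
  (\forall t \ae (@lebesgue_measure R), `]a, b[ t -> P t) ->
  ~ \forall t \near a^'+, ~ P t.
Proof.
move=> ab [N [mN N0 notP_N]] /nbhs_ballP [d d_gt0 notP].
pose c := Num.min (a + d) b.
have ac : a < c by rewrite lt_min ab ltrDl d_gt0.
have sub : `]a, c[ `<=` N.
  move=> t /=; rewrite in_itv /= lt_min => /andP[at_ /andP[td tb]].
  apply: notP_N => /(_ _)/= Pt; apply: (notP t) => //; last first.
    by apply: Pt; rewrite in_itv /= at_.
  by rewrite /ball /= ltr0_norm ?subr_lt0 // opprB ltrBlDl.
have : (lebesgue_measure `]a, c[ <= lebesgue_measure N)%E.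
  by apply: le_measure => //; rewrite inE //; exact: measurable_itv.
by rewrite N0 lebesgue_measure_itv /= lte_fin ac -EFinD lee_fin subr_le0 leNgt ac.
Qed.

End Sphere.

Theorem proposition3 (R : realType) (alpha beta : R) :
  0 < alpha < pi / 2 -> 0 < beta < pi / 2 ->
  ~ (exists (T : R) (x : R -> 'cV[R]_3) (u1 u2 : R -> R)
        (lam : R -> 'rV[R]_3),
       [/\ abnormal_extremal_pair alpha beta T x u1 u2 lam,
           x 0 = north R &
           bang_bang T u1 u2]).
Proof.
move=> ha hb [T [x [u1 [u2 [lam [[T0 _ [xlip _ _] [llip lx lnz _] [_ Hmax]] x0 _]]]]]].
have sa : 0 < sin alpha := sin_gt0_pihalf ha.
have sb : 0 < sin beta := sin_gt0_pihalf hb.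
have cb : 0 < cos beta by apply: cos_gt0_pihalf; case/andP: hb => *; apply/andP; split; lra.
have T0' : (0 : R) <= 0 <= T by rewrite lexx ltW.
have := lx 0 T0'; rewrite x0 => lam0_perp.
have [v1 [v2 [v1b v2b ham0_gt0]]] :=
  exists_control_Amx_north_gt0 (mulr_gt0 sa sb) (mulr_gt0 sa cb) (lnz 0 T0') lam0_perp.
pose g t := ham alpha beta 0 (lam t) (x t) v1 v2.
have g_cvg : g t @[t --> (0:R)^'+] --> g 0.
  rewrite /g /ham addr0; under eq_cvg do rewrite addr0.
  by apply: cvg_bilinear; [exact: lipschitz_cvg_right llip | exact: lipschitz_cvg_right xlip].
apply: (ae_itv_frequently_right (fun t => g t <= 0) T0).
  (* the library's instance hint for ae filters does not fire here *)
  apply: (@filterS _ _ (ae_filter_ringOfSetsType lebesgue_measure) _ _ _ Hmax).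
  move=> t Ht /Ht [ham_le ham_u0].
  by rewrite -ham_u0; exact: ham_le.
near=> t; apply/negP; rewrite -ltNge; near: t.
by apply: (cvgr_gt _ g_cvg); rewrite /g /ham addr0 x0.
Unshelve. all: by end_near. Qed.
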